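(* Let $L>0$ and let $\alpha,\beta:\mathbb{R}\to\mathbb{R}^2$ be smooth $L$-periodic maps with $\alpha'$ nowhere zero, $\langle\beta,\alpha'\rangle = 0$ and $|\alpha'|^2+|\beta|^2=1$. Let $\gamma(t,s) = \tfrac12(\alpha(s+t)+\alpha(s-t)) + \tfrac12\int_{s-t}^{s+t}\beta(\xi)\,d\xi$, $a=\alpha'+\beta$, $b=\alpha'-\beta$, and let $\psi,\tilde\psi:\mathbb{R}\to\mathbb{R}$ be smooth functions with $a = (\cos\psi,\sin\psi)$ and $b = -(\cos\tilde\psi,\sin\tilde\psi)$. Assume that the closed curve $\alpha$ has non-zero rotation index and that the unit tangent map is continuous. If $\psi(s_0) = \psi(s_1) = \tilde\psi(r_0)$ for some $s_0,s_1,r_0$ with $0 < s_1 - s_0 < L$, then $\psi$ is constant on $(s_0,s_1)$.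
   Context: The unit tangent map is $U(t,s) = \gamma_{,s}(t,s)/|\gamma_{,s}(t,s)|$, defined where $\gamma_{,s}(t,s)\neq 0$; note $2\gamma_{,s}(t,s) = a(s+t)+b(s-t)$. ''The unit tangent map is continuous'' means that for every $t\in\mathbb{R}$, $s\mapsto U(t,s)$ extends to a continuous map on all of $\mathbb{R}$. The rotation index of $\alpha$ is the degree of $\alpha'/|\alpha'|$ as a map from $\mathbb{R}/L\mathbb{Z}$ to the unit circle; $a$ and $b$ have the same degree $d$, so $\psi(s+L)-\psi(s) = \tilde\psi(s+L)-\tilde\psi(s) = 2\pi d$. *)

From Stdlib Require Import Reals.
From Coquelicot Require Import Coquelicot.
Open Scope R_scope.

Definition smooth (f : R -> R) : Prop :=
  forall (n : nat) (x : R), ex_derive_n f n x.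

Definition smooth2 (f : R -> R * R) : Prop :=
  smooth (fun x => fst (f x)) /\ smooth (fun x => snd (f x)).

Definition periodic2 (L : R) (f : R -> R * R) : Prop :=
  forall x, f (x + L) = f x.

Definition deriv2 (f : R -> R * R) (s : R) : R * R :=
  (Derive (fun x => fst (f x)) s, Derive (fun x => snd (f x)) s).

Definition dot2 (u v : R * R) : R := fst u * fst v + snd u * snd v.
Definition norm2 (u : R * R) : R := sqrt (dot2 u u).

Definition continuous2 (f : R -> R * R) : Prop :=
  forall s, continuous (fun x => fst (f x)) s /\ continuous (fun x => snd (f x)) s.

Definition gamma (alpha beta : R -> R * R) (t s : R) : R * R :=
  ( / 2 * (fst (alpha (s + t)) + fst (alpha (s - t)))
      + / 2 * RInt (fun xi => fst (beta xi)) (s - t) (s + t),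
    / 2 * (snd (alpha (s + t)) + snd (alpha (s - t)))
      + / 2 * RInt (fun xi => snd (beta xi)) (s - t) (s + t) ).

Definition gamma_s (alpha beta : R -> R * R) (t s : R) : R * R :=
  deriv2 (fun s' => gamma alpha beta t s') s.

(* unit tangent map U(t,s) = gamma_s / |gamma_s| (meaningful where gamma_s <> 0) *)
Definition unit_tangent (alpha beta : R -> R * R) (t s : R) : R * R :=
  let g := gamma_s alpha beta t s in (fst g / norm2 g, snd g / norm2 g).

(* "The unit tangent map is continuous": for every t, s |-> U(t,s) extends
   to a continuous map on all of R. *)
Definition unit_tangent_continuous (alpha beta : R -> R * R) : Prop :=
  forall t : R, exists V : R -> R * R,
    continuous2 V /\
    forall s, gamma_s alpha beta t s <> (0, 0) -> V s = unit_tangent alpha beta t s.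

(* Rotation index of the L-periodic curve alpha (alpha' nowhere zero): the degree
   of alpha'/|alpha'| : R/LZ -> S^1, defined through a continuous lift theta. *)
Definition has_rotation_index (L : R) (alpha : R -> R * R) (d : Z) : Prop :=
  exists theta : R -> R,
    (forall s, continuous theta s) /\
    (forall s, deriv2 alpha s = (norm2 (deriv2 alpha s) * cos (theta s),
                                 norm2 (deriv2 alpha s) * sin (theta s))) /\
    theta L - theta 0 = 2 * PI * IZR d.

(* Put [t = (u - v) / 2].  Then [gamma_s (t, s) = sin dl * (- sin mu, cos mu)] with
   [dl = (psi (s + t) - psit (s - t)) / 2] and [mu = (psi (s + t) + psit (s - t)) / 2].
   If [psi u = psit v] mod [2 PI] then [sin dl] vanishes at [s = (u + v) / 2], and this
   zero is simple unless [psi' u = psit' v]; at a simple zero the unit tangent would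
   flip sign, contradicting its continuity.  Since [(cos psit, sin psit) = - b] makes an
   obtuse angle with [alpha'], [psit] winds as often as [alpha'], i.e. [d <> 0] times, so
   it attains every angle mod [2 PI].  Hence [psi'] is a function of [psi], and such a
   function cannot rise above (or fall below) equal values at the ends of an interval. *)

From Stdlib Require Import Reals Lra Lia ZArith.
From Coquelicot Require Import Coquelicot.
Open Scope R_scope.

Lemma continuous_eps_delta (f : R -> R) (x : R) : continuous f x ->
  forall eps, 0 < eps -> exists d, 0 < d /\ forall y, Rabs (y - x) < d -> Rabs (f y - f x) < eps.
Proof.
  intros Hc eps Heps.
  apply continuity_pt_filterlim in Hc.
  destruct (Hc eps ltac:(lra)) as [d [Hd Hy]].
  exists d; split; [lra |]. intros y Hyx.
  destruct (Req_dec y x) as [-> | Hne].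
  - rewrite Rminus_diag, Rabs_R0; lra.
  - apply Hy. split; [split; [exact I | auto] | exact Hyx].
Qed.

Lemma smooth_ex_derive (f : R -> R) : smooth f -> forall x, ex_derive f x.
Proof. intros Hf x. exact (Hf 1%nat x). Qed.

Lemma continuous_of_ex_derive (f : R -> R) (x : R) : ex_derive f x -> continuous f x.
Proof. exact (@ex_derive_continuous R_AbsRing R_NormedModule f x). Qed.

Lemma smooth_continuous (f : R -> R) : smooth f -> forall x, continuous f x.
Proof. intros Hf x. apply continuous_of_ex_derive, smooth_ex_derive, Hf. Qed.

Lemma mul_pos_of_close (q D : R) : Rabs (q - D) < Rabs D -> 0 < q * D.
Proof. unfold Rabs; destruct (Rcase_abs (q - D)), (Rcase_abs D); nra. Qed.

Lemma is_derive_sign_near (f : R -> R) (x D : R) : is_derive f x D -> D <> 0 ->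
  forall d0, 0 < d0 -> exists h, 0 < h < d0 /\
    0 < (f (x + h) - f x) * D /\ 0 < (f x - f (x - h)) * D.
Proof.
  intros Hf HD d0 Hd0.
  apply is_derive_Reals in Hf.
  destruct (Hf (Rabs D) (Rabs_pos_lt D HD)) as [[d Hd] Hq]; simpl in Hq.
  set (h := Rmin (d / 2) (d0 / 2)).
  assert (Hh : 0 < h) by (apply Rmin_pos; lra).
  assert (h <= d / 2) by apply Rmin_l. assert (h <= d0 / 2) by apply Rmin_r.
  exists h; split; [lra |].
  assert (Qr := Hq h ltac:(lra) ltac:(rewrite Rabs_right; lra)).
  assert (Ql := Hq (- h) ltac:(lra) ltac:(rewrite Rabs_left; lra)).
  apply mul_pos_of_close in Qr, Ql.
  replace ((f (x + - h) - f x) / - h) with ((f x - f (x - h)) / h) in Ql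
    by (unfold Rminus; field; lra).
  split.
  - replace ((f (x + h) - f x) * D) with ((f (x + h) - f x) / h * D * h) by (field; lra).
    apply Rmult_lt_0_compat; lra.
  - replace ((f x - f (x - h)) * D) with ((f x - f (x - h)) / h * D * h) by (field; lra).
    apply Rmult_lt_0_compat; lra.
Qed.

Lemma last_crossing (f : R -> R) (a b l : R) : (forall x, continuous f x) -> a < b ->
  f a <= l < f b -> exists p, a <= p < b /\ f p = l /\ forall u, p < u <= b -> l < f u.
Proof.
  intros Hc Hab [Hla Hlb].
  set (E := fun u => a <= u <= b /\ f u <= l).
  destruct (completeness E) as [p [Hub Hlub]].
  { exists b; intros u [Hu _]; lra. }
  { exists a; split; lra. }
  assert (Hap : a <= p) by (apply Hub; split; lra).
  assert (Hpb : p <= b) by (apply Hlub; intros u [Hu _]; lra).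
  assert (Hle : f p <= l).
  { destruct (Rle_or_lt (f p) l) as [| Hgt]; auto. exfalso.
    destruct (continuous_eps_delta f p (Hc p) (f p - l) ltac:(lra)) as [d [Hd Hnear]].
    enough (Hub' : is_upper_bound E (p - d / 2)) by (specialize (Hlub _ Hub'); lra).
    intros u [Hu Hfu]. destruct (Rle_or_lt u (p - d / 2)); auto.
    assert (u <= p) by (apply Hub; split; auto).
    specialize (Hnear u ltac:(rewrite Rabs_left1; lra)). apply Rabs_def2 in Hnear. lra. }
  assert (Hpb' : p < b) by (destruct (Req_dec p b); [subst; lra | lra]).
  assert (Hge : l <= f p).
  { destruct (Rle_or_lt l (f p)) as [| Hlt]; auto. exfalso.
    destruct (continuous_eps_delta f p (Hc p) (l - f p) ltac:(lra)) as [d [Hd Hnear]].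
    set (u := Rmin (p + d / 2) b).
    assert (p < u) by (apply Rmin_glb_lt; lra).
    assert (u <= p + d / 2) by apply Rmin_l. assert (u <= b) by apply Rmin_r.
    enough (E u) by (assert (u <= p) by (apply Hub; auto); lra).
    split; [lra |]. specialize (Hnear u ltac:(rewrite Rabs_right; lra)).
    apply Rabs_def2 in Hnear. lra. }
  exists p; split; [lra | split; [lra |]].
  intros u Hu. destruct (Rle_or_lt (f u) l) as [Hfu |]; auto.
  assert (u <= p) by (apply Hub; split; [lra | auto]). lra.
Qed.

Lemma first_crossing (f : R -> R) (a b l : R) : (forall x, continuous f x) -> a < b ->
  f a < l <= f b -> exists q, a < q <= b /\ f q = l /\ forall u, a <= u < q -> f u < l.
Proof.
  intros Hc Hab Hl.
  set (F := fun u => - f (- u)).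
  assert (HF : forall x, continuous F x).
  { intros x. apply continuity_pt_filterlim, continuity_pt_opp, (continuity_pt_comp Ropp f).
    - apply continuity_pt_opp, continuity_pt_id.
    - apply continuity_pt_filterlim, Hc. }
  destruct (last_crossing F (- b) (- a) (- l) HF) as [p [Hp [HFp Hafter]]]; [lra | |].
  { unfold F; rewrite !Ropp_involutive; lra. }
  exists (- p); unfold F in *; split; [lra | split; [lra |]].
  intros u Hu. specialize (Hafter (- u) ltac:(lra)). rewrite Ropp_involutive in Hafter. lra.
Qed.

Definition derive_depends_on_value (h hd : R -> R) : Prop :=
  forall u v, h u = h v -> hd u = hd v.

(* If [h] rose above [h a] inside [a, b], it would pass upwards through some
   level [lam] (with [hd > 0] there by the mean value theorem) and later pass
   downwards through the same level, where [hd] would have to be the same. *)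
Lemma le_endpoint_of_derive_depends_on_value (h hd : R -> R) (a b x : R) :
  (forall y, is_derive h y (hd y)) -> derive_depends_on_value h hd ->
  a < x < b -> h a = h b -> h x <= h a.
Proof.
  intros Hd Hdep [Hax Hxb] Hab.
  assert (Hc : forall y, continuous h y)
    by (intros y; apply continuous_of_ex_derive; eexists; apply Hd).
  destruct (Rle_or_lt (h x) (h a)) as [| Hx]; auto. exfalso.
  set (l1 := h a + (h x - h a) / 3). set (l2 := h a + 2 * (h x - h a) / 3).
  destruct (last_crossing h a x l1 Hc Hax ltac:(unfold l1; lra)) as [p [Hp [Hhp Hp']]].
  destruct (first_crossing h p x l2 Hc ltac:(lra) ltac:(unfold l1, l2 in *; lra))
    as [q [Hq [Hhq Hq']]].
  destruct (MVT_cor2 h hd p q ltac:(lra)) as [xi [Hmvt Hxi]].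
  { intros z _. apply is_derive_Reals, Hd. }
  assert (Hl1 : l1 < h xi) by (apply Hp'; lra).
  assert (Hl2 : h xi < l2) by (apply Hq'; lra).
  assert (Hup : 0 < hd xi).
  { rewrite Hhq, Hhp in Hmvt. unfold l1, l2 in *. nra. }
  destruct (last_crossing (fun u => - h u) x b (- h xi)) as [r [Hr [Hhr Hr']]];
    [intros y; apply (continuous_opp h), Hc | lra | unfold l1, l2 in *; lra |].
  assert (Hdr : 0 < hd r) by (rewrite (Hdep r xi); lra).
  destruct (is_derive_sign_near h r (hd r) (Hd r) ltac:(lra) (b - r) ltac:(lra))
    as [e [He [Hrise _]]].
  specialize (Hr' (r + e) ltac:(lra)). nra.
Qed.

Lemma const_of_derive_depends_on_value (h hd : R -> R) (a b : R) :
  (forall y, is_derive h y (hd y)) -> derive_depends_on_value h hd ->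
  h a = h b -> forall x, a < x < b -> h x = h a.
Proof.
  intros Hd Hdep Hab x Hx.
  assert (Hle := le_endpoint_of_derive_depends_on_value h hd a b x Hd Hdep Hx Hab).
  assert (Hge := le_endpoint_of_derive_depends_on_value (fun z => - h z) (fun z => - hd z)
                   a b x (fun y => is_derive_opp h y (hd y) (Hd y))).
  enough (- h x <= - h a) by lra.
  apply Hge; [| exact Hx | lra].
  intros u v Huv. rewrite (Hdep u v); lra.
Qed.

Lemma reduce_mod_2PI (z : R) : exists k : Z, 0 <= z - 2 * PI * IZR k < 2 * PI.
Proof.
  assert (HPI := PI_RGT_0).
  exists (Zfloor (z / (2 * PI))).
  destruct (Zfloor_bound (z / (2 * PI))) as [Hlo Hhi].
  set (k := IZR (Zfloor (z / (2 * PI)))) in *.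
  assert (Ez : z = 2 * PI * (z / (2 * PI))) by (field; lra).
  split; nra.
Qed.

Lemma cos_zero_in_period (A : R) : exists y, A <= y <= A + 2 * PI /\ cos y = 0.
Proof.
  destruct (reduce_mod_2PI (A - PI / 2)) as [k Hk].
  exists (PI / 2 + 2 * PI * IZR (k + 1)). rewrite plus_IZR. split; [lra |].
  apply cos_eq_0_1. exists (2 * (k + 1))%Z. rewrite mult_IZR, plus_IZR. simpl. lra.
Qed.

Lemma cos_sin_eq_mod_2PI (x y : R) : cos x = cos y -> sin x = sin y ->
  exists k : Z, x = y + 2 * PI * IZR k.
Proof.
  intros Hc Hs.
  assert (Hc' := form2 x y). assert (Hs' := form4 x y).
  assert (Hhalf : sin ((x - y) / 2) = 0).
  { destruct (Req_dec (sin ((x - y) / 2)) 0) as [| Hne]; auto. exfalso.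
    apply (cos_sin_0 ((x + y) / 2)); split.
    - apply (Rmult_eq_reg_l (2 * sin ((x - y) / 2))); [lra | intro; apply Hne; lra].
    - apply (Rmult_eq_reg_l (-2 * sin ((x - y) / 2))); [lra | intro; apply Hne; lra]. }
  destruct (sin_eq_0_0 _ Hhalf) as [k Hk]. exists k. lra.
Qed.

Lemma winding_zero_of_cos_ne0 (h : R -> R) (a b : R) (m : Z) :
  (forall x, continuous h x) -> (forall x, cos (h x) <> 0) ->
  h b = h a + 2 * PI * IZR m -> m = 0%Z.
Proof.
  intros Hc Hcos Hm.
  destruct (Z.eq_dec m 0) as [| Hne]; auto. exfalso.
  assert (Hspan : 2 * PI <= Rmax (h a) (h b) - Rmin (h a) (h b)).
  { assert (HPI := PI_RGT_0).
    destruct (Z_lt_le_dec 0 m) as [Hpos | Hneg].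
    - assert (1 <= IZR m) by (apply IZR_le; lia).
      rewrite Rmax_right, Rmin_left; nra.
    - assert (IZR m <= -1) by (apply IZR_le; lia).
      rewrite Rmax_left, Rmin_right; nra. }
  destruct (cos_zero_in_period (Rmin (h a) (h b))) as [y [Hy Hcy]].
  destruct (IVT_gen_consistent h a b y Hc) as [x [_ Hx]]; [lra |].
  apply (Hcos x). rewrite Hx. exact Hcy.
Qed.

Lemma winding_lift_surjective_mod_2PI (f : R -> R) (L : R) (d : Z) :
  (forall x, continuous f x) -> f L - f 0 = 2 * PI * IZR d -> d <> 0%Z ->
  forall lam, exists v (k : Z), f v + 2 * PI * IZR k = lam.
Proof.
  intros Hc Hd Hd0 lam.
  assert (HPI := PI_RGT_0).
  destruct (reduce_mod_2PI (lam - f 0)) as [k Hk].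
  destruct (Z_lt_le_dec 0 d) as [Hpos | Hneg].
  - assert (1 <= IZR d) by (apply IZR_le; lia).
    destruct (IVT_gen_consistent f 0 L (lam - 2 * PI * IZR k) Hc) as [v [_ Hv]].
    { rewrite Rmin_left, Rmax_right; nra. }
    exists v, k. lra.
  - assert (IZR d <= -1) by (apply IZR_le; lia).
    destruct (IVT_gen_consistent f 0 L (lam - 2 * PI * IZR (k + 1)) Hc) as [v [_ Hv]].
    { rewrite plus_IZR, Rmin_right, Rmax_left; nra. }
    exists v, (k + 1)%Z. lra.
Qed.

Lemma norm2_pos (u : R * R) : u <> (0, 0) -> 0 < norm2 u.
Proof.
  destruct u as [u1 u2]; intros Hu. apply sqrt_lt_R0. unfold dot2; simpl.
  destruct (Req_dec u1 0) as [-> | H1]; [destruct (Req_dec u2 0) as [-> | H2] |].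
  - exfalso; apply Hu; reflexivity.
  - assert (0 < u2 * u2) by (apply Rsqr_pos_lt; auto). nra.
  - assert (0 < u1 * u1) by (apply Rsqr_pos_lt; auto). nra.
Qed.

Lemma norm2_sqr (u : R * R) : norm2 u * norm2 u = dot2 u u.
Proof. apply sqrt_sqrt. unfold dot2. nra. Qed.

(* [u - w = -(cos p, sin p)] with [w] orthogonal to [u] forces [cos p . u = - |u|^2]. *)
Lemma cos_sub_neg_of_opposite (u w : R * R) (p th : R) :
  u <> (0, 0) -> dot2 w u = 0 ->
  u = (norm2 u * cos th, norm2 u * sin th) ->
  fst u - fst w = - cos p -> snd u - snd w = - sin p -> cos (p - th) < 0.
Proof.
  intros Hu Hwu Hpolar Hp1 Hp2.
  assert (Hn := norm2_pos u Hu). assert (Hsq := norm2_sqr u).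
  set (n := norm2 u) in *.
  destruct u as [u1 u2], w as [w1 w2].
  injection Hpolar as Hu1 Hu2. unfold dot2 in *; simpl in *.
  enough (n * cos (p - th) = - (n * n)) by nra.
  rewrite cos_minus. nra.
Qed.

Lemma Derive_periodic (f : R -> R) (L x : R) :
  (forall y, f (y + L) = f y) -> (forall y, ex_derive f y) -> Derive f (x + L) = Derive f x.
Proof.
  intros Hper Hf.
  rewrite <- (Derive_ext (fun y => f (y + L)) f x Hper).
  rewrite (Derive_comp f (fun y => y + L) x); [| apply Hf | auto_derive; exact I].
  replace (Derive (fun y => y + L) x) with 1; [ring |].
  symmetry; apply is_derive_unique; auto_derive; [exact I | ring].
Qed.

Lemma deriv2_periodic (L : R) (f : R -> R * R) (x : R) :
  smooth2 f -> periodic2 L f -> deriv2 f (x + L) = deriv2 f x.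
Proof.
  intros [Hf1 Hf2] Hper. unfold deriv2.
  rewrite !(Derive_periodic _ L x); try (intros y; rewrite Hper; reflexivity);
    auto using smooth_ex_derive.
Qed.

Lemma psit_winding (L : R) (alpha beta : R -> R * R) (psit : R -> R) (d : Z) :
  smooth2 alpha -> periodic2 L alpha -> periodic2 L beta ->
  (forall s, deriv2 alpha s <> (0, 0)) ->
  (forall s, dot2 (beta s) (deriv2 alpha s) = 0) ->
  smooth psit ->
  (forall s, fst (deriv2 alpha s) - fst (beta s) = - cos (psit s) /\
             snd (deriv2 alpha s) - snd (beta s) = - sin (psit s)) ->
  has_rotation_index L alpha d ->
  psit L - psit 0 = 2 * PI * IZR d.
Proof.
  intros Ha Ha_per Hb_per Ha_reg Horth Hpsit Hpsit_b [th [Hth_c [Hth Hth_d]]].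
  assert (Hcos : forall s, cos (psit s - th s) <> 0).
  { intros s. destruct (Hpsit_b s) as [P1 P2].
    apply Rlt_not_eq, (cos_sub_neg_of_opposite (deriv2 alpha s) (beta s)); auto. }
  assert (Hperiod : exists j : Z, psit L = psit 0 + 2 * PI * IZR j).
  { destruct (Hpsit_b 0) as [P1 P2]. destruct (Hpsit_b L) as [Q1 Q2].
    assert (HaL := deriv2_periodic L alpha 0 Ha Ha_per). assert (HbL := Hb_per 0).
    rewrite Rplus_0_l in HaL, HbL. rewrite HaL, HbL in Q1, Q2.
    apply cos_sin_eq_mod_2PI; lra. }
  destruct Hperiod as [j Hj].
  assert (Hjd : (j - d)%Z = 0%Z).
  { apply (winding_zero_of_cos_ne0 (fun s => psit s - th s) 0 L); auto.
    - intros x. apply (continuous_minus psit th); auto using smooth_continuous.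
    - rewrite minus_IZR. lra. }
  assert (j = d) by lia. subst. lra.
Qed.

Lemma is_derive_RInt_centered (g : R -> R) (t s : R) : (forall x, continuous g x) ->
  is_derive (fun s' => RInt g (s' - t) (s' + t)) s (g (s + t) - g (s - t)).
Proof.
  intros Hg.
  replace (g (s + t) - g (s - t)) with (minus (scal 1 (g (s + t))) (scal 1 (g (s - t)))).
  - apply (is_derive_RInt_bound_comp g (RInt g) (fun s' => s' - t) (fun s' => s' + t)).
    + apply filter_forall. intros ab. apply (RInt_correct g), ex_RInt_continuous.
      intros z _. apply Hg.
    + apply Hg.
    + apply Hg.
    + auto_derive; [exact I | reflexivity].
    + auto_derive; [exact I | reflexivity].
  - unfold minus, plus, opp, scal; simpl; unfold mult; simpl. ring.
Qed.

Lemma Derive_gamma_component (f g : R -> R) (t s : R) :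
  (forall x, ex_derive f x) -> (forall x, continuous g x) ->
  Derive (fun s' => / 2 * (f (s' + t) + f (s' - t)) + / 2 * RInt g (s' - t) (s' + t)) s
  = / 2 * ((Derive f (s + t) + g (s + t)) + (Derive f (s - t) - g (s - t))).
Proof.
  intros Hf Hg.
  set (I := fun s' => RInt g (s' - t) (s' + t)).
  change (Derive (fun s' => / 2 * (f (s' + t) + f (s' - t)) + / 2 * I s') s
          = / 2 * ((Derive f (s + t) + g (s + t)) + (Derive f (s - t) - g (s - t)))).
  assert (HI := is_derive_RInt_centered g t s Hg). fold I in HI.
  apply is_derive_unique. auto_derive.
  - repeat split; auto. eexists; exact HI.
  - change (fun x => f x) with f. change (fun x => I x) with I.
    rewrite (is_derive_unique I s _ HI). replace (s + - t) with (s - t) by ring. ring.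
Qed.

Lemma gamma_s_polar (alpha beta : R -> R * R) (psi psit : R -> R) (t s : R) :
  smooth2 alpha -> smooth2 beta ->
  (forall s, fst (deriv2 alpha s) + fst (beta s) = cos (psi s) /\
             snd (deriv2 alpha s) + snd (beta s) = sin (psi s)) ->
  (forall s, fst (deriv2 alpha s) - fst (beta s) = - cos (psit s) /\
             snd (deriv2 alpha s) - snd (beta s) = - sin (psit s)) ->
  let dl := (psi (s + t) - psit (s - t)) / 2 in
  let mu := (psi (s + t) + psit (s - t)) / 2 in
  gamma_s alpha beta t s = (- sin dl * sin mu, sin dl * cos mu).
Proof.
  intros [Ha1 Ha2] [Hb1 Hb2] Hpsi Hpsit dl mu.
  unfold gamma_s, deriv2, gamma; simpl.
  rewrite (Derive_gamma_component (fun x => fst (alpha x)) (fun x => fst (beta x))),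
          (Derive_gamma_component (fun x => snd (alpha x)) (fun x => snd (beta x)));
    auto using smooth_ex_derive, smooth_continuous.
  destruct (Hpsi (s + t)) as [P1 P2]. destruct (Hpsit (s - t)) as [Q1 Q2].
  unfold deriv2 in *; simpl in *.
  assert (Hc := form2 (psi (s + t)) (psit (s - t))).
  assert (Hs := form4 (psi (s + t)) (psit (s - t))).
  fold dl mu in Hc, Hs. f_equal; lra.
Qed.

Lemma norm2_polar (c m : R) : norm2 (- c * sin m, c * cos m) = Rabs c.
Proof.
  unfold norm2, dot2; simpl. rewrite <- sqrt_Rsqr_abs. f_equal.
  assert (H := sin2_cos2 m). unfold Rsqr in *. nra.
Qed.

Lemma normalized_polar_component (c m : R) : c <> 0 ->
  let w := (- c * sin m, c * cos m) in
  fst w / norm2 w * - sin m + snd w / norm2 w * cos m = c / Rabs c.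
Proof.
  intros Hc w. unfold w. rewrite norm2_polar. simpl.
  assert (Hpyth := sin2_cos2 m). unfold Rsqr in Hpyth.
  assert (0 < Rabs c) by (apply Rabs_pos_lt; auto).
  transitivity (c * (sin m * sin m + cos m * cos m) / Rabs c); [field; lra |].
  rewrite Hpyth. field. lra.
Qed.

Lemma div_Rabs_pos (a : R) : 0 < a -> a / Rabs a = 1.
Proof. intros Ha. rewrite Rabs_right by lra. field. lra. Qed.

Lemma div_Rabs_neg (a : R) : a < 0 -> a / Rabs a = -1.
Proof. intros Ha. rewrite Rabs_left by lra. field. lra. Qed.

Lemma sign_discontinuous_at_simple_zero (g q : R -> R) (x D : R) :
  is_derive g x D -> D <> 0 -> g x = 0 -> continuous q x ->
  ~ (forall s, g s <> 0 -> q s = g s / Rabs (g s)).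
Proof.
  intros Hg HD Hg0 Hq Hsign.
  destruct (continuous_eps_delta q x Hq 1 Rlt_0_1) as [d [Hd Hnear]].
  destruct (is_derive_sign_near g x D Hg HD d Hd) as [h [Hh [Hr Hl]]].
  rewrite Hg0 in Hr, Hl.
  assert (Qr := Hnear (x + h) ltac:(rewrite Rabs_right; lra)).
  assert (Ql := Hnear (x - h) ltac:(rewrite Rabs_left; lra)).
  apply Rabs_def2 in Qr, Ql.
  destruct (Rlt_or_le 0 D) as [HDp | HDn].
  - rewrite Hsign, div_Rabs_pos in Qr by nra. rewrite Hsign, div_Rabs_neg in Ql by nra. lra.
  - rewrite Hsign, div_Rabs_neg in Qr by nra. rewrite Hsign, div_Rabs_pos in Ql by nra. lra.
Qed.

Lemma Derive_psi_eq_Derive_psit (alpha beta : R -> R * R) (psi psit : R -> R)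
  (u v : R) (k : Z) :
  smooth2 alpha -> smooth2 beta -> smooth psi -> smooth psit ->
  (forall s, fst (deriv2 alpha s) + fst (beta s) = cos (psi s) /\
             snd (deriv2 alpha s) + snd (beta s) = sin (psi s)) ->
  (forall s, fst (deriv2 alpha s) - fst (beta s) = - cos (psit s) /\
             snd (deriv2 alpha s) - snd (beta s) = - sin (psit s)) ->
  unit_tangent_continuous alpha beta ->
  psi u = psit v + 2 * PI * IZR k -> Derive psi u = Derive psit v.
Proof.
  intros Ha Hb Hpsi_s Hpsit_s Hpsi Hpsit HU Hk.
  destruct (Req_dec (Derive psi u) (Derive psit v)) as [| Hne]; auto. exfalso.
  set (t := (u - v) / 2). set (s0 := (u + v) / 2).
  assert (Eu : s0 + t = u) by (unfold s0, t; field).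
  assert (Ev : s0 - t = v) by (unfold s0, t; field).
  set (dl := fun s => (psi (s + t) - psit (s - t)) / 2).
  set (mu := fun s => (psi (s + t) + psit (s - t)) / 2).
  assert (Hsin0 : sin (dl s0) = 0).
  { apply sin_eq_0_1. exists k. unfold dl. rewrite Eu, Ev, Hk. field. }
  destruct (HU t) as [V [HVc HVeq]].
  apply (sign_discontinuous_at_simple_zero (fun s => sin (dl s))
           (fun s => fst (V s) * - sin (mu s) + snd (V s) * cos (mu s))
           s0 (cos (dl s0) * ((Derive psi u - Derive psit v) / 2))).
  - unfold dl. auto_derive.
    + repeat split; auto using smooth_ex_derive.
    + change (fun x => psi x) with psi. change (fun x => psit x) with psit.
      replace (s0 + - t) with (s0 - t) by ring. rewrite Eu, Ev. unfold Rminus, Rdiv. ring.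
  - apply Rmult_integral_contrapositive. split.
    + intro Hcos. apply (cos_sin_0 (dl s0)). auto.
    + intro. apply Hne. lra.
  - exact Hsin0.
  - destruct (HVc s0) as [HV1 HV2]. unfold mu.
    assert (Hmu : continuous (fun s => (psi (s + t) + psit (s - t)) / 2) s0).
    { apply continuous_of_ex_derive. auto_derive. repeat split; auto using smooth_ex_derive. }
    apply (continuous_plus (fun s => fst (V s) * - sin (mu s)) (fun s => snd (V s) * cos (mu s))).
    + apply (continuous_mult (fun s => fst (V s))); auto.
      apply (continuous_opp (fun s => sin (mu s))), continuous_sin_comp, Hmu.
    + apply (continuous_mult (fun s => snd (V s))); auto.
      apply continuous_cos_comp, Hmu.
  - intros s Hs.
    assert (Hgs := gamma_s_polar alpha beta psi psit t s Ha Hb Hpsi Hpsit). simpl in Hgs.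
    fold (dl s) (mu s) in Hgs.
    assert (Hnz : gamma_s alpha beta t s <> (0, 0)).
    { rewrite Hgs. intros Heq. injection Heq as H1 H2.
      apply (cos_sin_0 (mu s)). split; apply (Rmult_eq_reg_l (sin (dl s))); auto; lra. }
    rewrite (HVeq s Hnz). unfold unit_tangent. rewrite Hgs.
    apply normalized_polar_component, Hs.
Qed.

Theorem lemma2p7 (L : R) (alpha beta : R -> R * R) (psi psit : R -> R)
  (s0 s1 r0 : R)
  (HL : 0 < L)
  (Ha_smooth : smooth2 alpha) (Hb_smooth : smooth2 beta)
  (Ha_per : periodic2 L alpha) (Hb_per : periodic2 L beta)
  (Ha_reg : forall s, deriv2 alpha s <> (0, 0))
  (Horth : forall s, dot2 (beta s) (deriv2 alpha s) = 0)
  (Hnorm : forall s, dot2 (deriv2 alpha s) (deriv2 alpha s) + dot2 (beta s) (beta s) = 1)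
  (Hpsi_smooth : smooth psi) (Hpsit_smooth : smooth psit)
  (Hpsi : forall s, fst (deriv2 alpha s) + fst (beta s) = cos (psi s) /\
                    snd (deriv2 alpha s) + snd (beta s) = sin (psi s))
  (Hpsit : forall s, fst (deriv2 alpha s) - fst (beta s) = - cos (psit s) /\
                     snd (deriv2 alpha s) - snd (beta s) = - sin (psit s))
  (Hrot : exists d : Z, d <> 0%Z /\ has_rotation_index L alpha d)
  (HU : unit_tangent_continuous alpha beta)
  (Heq1 : psi s0 = psi s1) (Heq2 : psi s1 = psit r0)
  (Hs : 0 < s1 - s0 < L) :
  forall x y, s0 < x < s1 -> s0 < y < s1 -> psi x = psi y.
Proof.
  destruct Hrot as [d [Hd0 Hrd]].
  assert (Hwind := psit_winding L alpha beta psit d Ha_smooth Ha_per Hb_per Ha_reg Horth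
                     Hpsit_smooth Hpsit Hrd).
  assert (Hhit := winding_lift_surjective_mod_2PI psit L d
                    (smooth_continuous psit Hpsit_smooth) Hwind Hd0).
  assert (Hdep : derive_depends_on_value psi (Derive psi)).
  { intros u1 u2 Hu. destruct (Hhit (psi u1)) as [v [k Hv]].
    rewrite (Derive_psi_eq_Derive_psit alpha beta psi psit u1 v k),
            (Derive_psi_eq_Derive_psit alpha beta psi psit u2 v k); auto; lra. }
  assert (Hpsi_d : forall z, is_derive psi z (Derive psi z)).
  { intros z. apply Derive_correct, smooth_ex_derive, Hpsi_smooth. }
  intros x y Hx Hy.
  rewrite (const_of_derive_depends_on_value psi (Derive psi) s0 s1 Hpsi_d Hdep Heq1 x Hx),
          (const_of_derive_depends_on_value psi (Derive psi) s0 s1 Hpsi_d Hdep Heq1 y Hy).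
  reflexivity.
Qed.
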